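(* Let $(V_1,\dots,V_n)$ be an $n$-tuple of doubly non-commuting isometries on $H$ and let $k\ge0$. Then for all $i\ne j$: (1) $V_i$ commutes with $V_j^kV_j^{*k}$; (2) $V_i^*$ commutes with $V_j^kV_j^{*k}$; (3) $V_i$ and $V_i^*$ commute with $V_j^k(\mathbf 1-V_jV_j^* )V_j^{*k}$.
   Context: Fix $n\ge1$ and $z_{ij}\in\mathbb T$ ($i\ne j$) with $z_{ji}=\overline{z_{ij}}$; $(V_1,\dots,V_n)$ is doubly non-commuting if the $V_i$ are isometries on $H$ with $V_i^*V_j=\overline{z_{ij}}V_jV_i^*$ for $i\ne j$. $\mathbf 1$ is the identity operator. *)

From mathcomp Require Import all_boot all_order all_algebra.
From mathcomp Require Export complex.
Set Implicit Arguments. Unset Strict Implicit. Unset Printing Implicit Defensive.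
Import Order.TTheory GRing.Theory Num.Theory.
Local Open Scope ring_scope.

Definition is_inner_product (R : rcfType) (H : lmodType R[i])
  (ip : H -> H -> R[i]) : Prop :=
  [/\ (forall (a : R[i]) x y w, ip (a *: x + y) w = a * ip x w + ip y w),
      (forall x y, ip y x = (ip x y)^*),
      (forall x, 0 <= ip x x) &
      (forall x, ip x x = 0 -> x = 0)].

Definition is_adjoint (R : rcfType) (H : lmodType R[i])
  (ip : H -> H -> R[i]) (T S : H -> H) : Prop :=
  forall x y, ip (T x) y = ip x (S y).

Definition is_isometry (R : rcfType) (H : lmodType R[i])
  (ip : H -> H -> R[i]) (T : H -> H) : Prop :=
  forall x, ip (T x) (T x) = ip x x.

Definition doubly_noncommuting (R : rcfType) (H : lmodType R[i])
  (ip : H -> H -> R[i]) (n : nat) (z : 'I_n -> 'I_n -> R[i])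
  (V Vs : 'I_n -> H -> H) : Prop :=
  (forall i, is_adjoint ip (V i) (Vs i)) /\
  (forall i, is_isometry ip (V i)) /\
  (forall i j, i != j -> forall x, Vs i (V j x) = (z i j)^* *: V j (Vs i x)).

From mathcomp Require Import all_boot all_order all_algebra.
From mathcomp Require Import complex ring.
Set Implicit Arguments. Unset Strict Implicit. Unset Printing Implicit Defensive.
Import Order.TTheory GRing.Theory Num.Theory.
Local Open Scope ring_scope.

(* Polarization makes every isometry a left inverse of its adjoint, V^* V = 1.
   Then a := V_i V_j x - z_ij V_j V_i x is killed by V_i^* and V_j^* although
   it lies in the range of V_i plus that of V_j, so it is orthogonal to itself
   and V_i V_j = z_ij V_j V_i.  With the defining relation and adjoints, V_i
   and V_i^* each commute with V_j and V_j^* up to mutually inverse factors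
   (z_ij and its conjugate), which cancel in V_j^k V_j^*k.  Finally
   V_j^k (1 - V_j V_j^* ) V_j^*k = V_j^k V_j^*k - V_j^(k+1) V_j^*(k+1). *)

Section QCommute.
Variables (K : pzRingType) (M : lmodType K).

Definition qcommute (c : K) (A B : M -> M) := forall x, A (B x) = c *: B (A x).

Lemma qcommute_flip c d A B : d * c = 1 -> qcommute c A B -> qcommute d B A.
Proof. by move=> dc AB x; rewrite AB scalerA dc scale1r. Qed.

Lemma qcommute_iter c A B m :
  scalable B -> qcommute c A B -> qcommute (c ^+ m) A (iter m B).
Proof.
move=> BZ AB; elim: m => [|m IHm] x /=; first by rewrite scale1r.
by rewrite AB IHm BZ scalerA exprS.
Qed.

Lemma qcommute_comp c d A B1 B2 :
  scalable B1 -> qcommute c A B1 -> qcommute d A B2 ->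
  qcommute (c * d) A (B1 \o B2).
Proof. by move=> B1Z AB1 AB2 x /=; rewrite AB1 AB2 B1Z scalerA. Qed.

Lemma iter_scalable (f : M -> M) m : scalable f -> scalable (iter m f).
Proof. by move=> fZ a; elim: m => [|m IHm] x //=; rewrite IHm fZ. Qed.

Lemma iterB (f : M -> M) m :
  {morph f : x y / x - y} -> {morph iter m f : x y / x - y}.
Proof. by move=> fB; elim: m => [|m IHm] x y //=; rewrite IHm fB. Qed.

End QCommute.

Lemma commute_iter_comp (K : comPzRingType) (M : lmodType K) c d
    (A B1 B2 : M -> M) m :
  scalable B1 -> scalable B2 -> qcommute c A B1 -> qcommute d A B2 ->
  c * d = 1 -> forall x, A (iter m B1 (iter m B2 x)) = iter m B1 (iter m B2 (A x)).
Proof.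
move=> B1Z B2Z AB1 AB2 cd x.
have := qcommute_comp (iter_scalable m B1Z) (qcommute_iter m B1Z AB1)
                      (qcommute_iter m B2Z AB2) x.
by rewrite -exprMn cd expr1n scale1r.
Qed.

Lemma conj_lincomb_eq0 (C : numClosedFieldType) (p q : C) :
  (forall a, a^* * p + a * q = 0) -> p = 0.
Proof.
move=> pq0; have := pq0 1; have := pq0 'i.
rewrite conjCi rmorph1 !mul1r mulNr addrC => /eqP; rewrite subr_eq0.
move=> /eqP/(mulfI (neq0Ci C)) -> /eqP.
by rewrite -mulr2n mulrn_eq0 orFb => /eqP.
Qed.

Section InnerProduct.
Variables (R : rcfType) (H : lmodType R[i]) (ip : H -> H -> R[i]).
Hypothesis ipP : is_inner_product ip.

Lemma innerDZl a x y w : ip (a *: x + y) w = a * ip x w + ip y w.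
Proof. by case: ipP. Qed.

Lemma inner_conj x y : ip y x = (ip x y)^*.
Proof. by case: ipP. Qed.

Lemma inner_self_eq0 x : ip x x = 0 -> x = 0.
Proof. by case: ipP => _ _ _; apply. Qed.

Lemma innerDl x y w : ip (x + y) w = ip x w + ip y w.
Proof. by have := innerDZl 1 x y w; rewrite scale1r mul1r. Qed.

Lemma inner0l w : ip 0 w = 0.
Proof. by apply: (addrI (ip 0 w)); rewrite -innerDl !addr0. Qed.

Lemma innerZl a x w : ip (a *: x) w = a * ip x w.
Proof. by rewrite -[a *: x]addr0 innerDZl inner0l addr0. Qed.

Lemma innerBl x y w : ip (x - y) w = ip x w - ip y w.
Proof. by rewrite innerDl -scaleN1r innerZl mulN1r. Qed.

Lemma innerDr w x y : ip w (x + y) = ip w x + ip w y.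
Proof. by rewrite !(inner_conj _ w) innerDl rmorphD. Qed.

Lemma innerZr a w x : ip w (a *: x) = a^* * ip w x.
Proof. by rewrite !(inner_conj _ w) innerZl rmorphM. Qed.

Lemma inner0r w : ip w 0 = 0.
Proof. by rewrite inner_conj inner0l rmorph0. Qed.

Lemma inner_eql u v : (forall w, ip u w = ip v w) -> u = v.
Proof.
move=> uv; apply/eqP; rewrite -subr_eq0; apply/eqP/inner_self_eq0.
by rewrite innerBl !uv subrr.
Qed.

Lemma inner_eqr u v : (forall w, ip w u = ip w v) -> u = v.
Proof. by move=> uv; apply: inner_eql => w; rewrite inner_conj uv -inner_conj. Qed.

Section Adjoint.
Variables T S : H -> H.
Hypothesis TS : is_adjoint ip T S.

Lemma adjoint_sym : is_adjoint ip S T.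
Proof. by move=> x y; rewrite inner_conj -TS -inner_conj. Qed.

Lemma adjoint_scalable : scalable T.
Proof. by move=> a x; apply: inner_eql => w; rewrite TS !innerZl TS. Qed.

Lemma adjointD : {morph T : x y / x + y}.
Proof. by move=> x y; apply: inner_eql => w; rewrite TS !innerDl !TS. Qed.

Lemma adjointB : {morph T : x y / x - y}.
Proof. by move=> x y; apply: inner_eql => w; rewrite TS !innerBl !TS. Qed.

Lemma qcommute_adjoint c A As :
  is_adjoint ip A As -> qcommute c A T -> qcommute c^* S As.
Proof.
move=> AAs AT x; apply: inner_eqr => w.
by rewrite innerZr conjCK -TS -AAs AT innerZl TS AAs.
Qed.

Hypothesis T_isometry : is_isometry ip T.

Lemma isometry_inner x y : ip (T x) (T y) = ip x y.
Proof.
apply/eqP; rewrite -subr_eq0; apply/eqP.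
apply: (@conj_lincomb_eq0 _ _ (ip (T y) (T x) - ip y x)) => a.
have := T_isometry (x + a *: y).
rewrite adjointD adjoint_scalable !innerDl !innerDr !innerZl !innerZr.
rewrite !T_isometry => /eqP; rewrite -subr_eq0 => /eqP E.
by rewrite -[RHS]E; ring.
Qed.

Lemma isometry_adjointK : cancel T S.
Proof. by move=> x; apply: inner_eqr => w; rewrite -TS isometry_inner. Qed.
End Adjoint.
End InnerProduct.

Section DoublyNoncommuting.
Variables (R : rcfType) (H : lmodType R[i]) (ip : H -> H -> R[i]).
Variables (n : nat) (z : 'I_n -> 'I_n -> R[i]) (V Vs : 'I_n -> H -> H).
Hypothesis ipP : is_inner_product ip.
Hypothesis z_norm1 : forall i j, i != j -> `|z i j| = 1.
Hypothesis z_sym : forall i j, i != j -> z j i = (z i j)^*.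
Hypothesis dnc : doubly_noncommuting ip z V Vs.

Let V_adjoint i : is_adjoint ip (V i) (Vs i).
Proof. by case: dnc. Qed.

Let Vs_adjoint i : is_adjoint ip (Vs i) (V i).
Proof. exact: adjoint_sym. Qed.

Let V_isometry i : is_isometry ip (V i).
Proof. by case: dnc => _ [V_iso _]; apply: V_iso. Qed.

Let V_scalable i : scalable (V i).
Proof. exact: adjoint_scalable (V_adjoint i). Qed.

Let Vs_scalable i : scalable (Vs i).
Proof. exact: adjoint_scalable (Vs_adjoint i). Qed.

Lemma VB i : {morph V i : x y / x - y}.
Proof. exact: adjointB (V_adjoint i). Qed.

Lemma VsB i : {morph Vs i : x y / x - y}.
Proof. exact: adjointB (Vs_adjoint i). Qed.

Let VK i : cancel (V i) (Vs i).
Proof. exact: isometry_adjointK (V_adjoint i) (V_isometry i). Qed.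

Lemma z_mul_conj i j : i != j -> z i j * (z i j)^* = 1.
Proof. by move=> ij; rewrite -normCK z_norm1 ?expr1n. Qed.

Lemma conj_z_swap i j : i != j -> (z j i)^* = z i j.
Proof. by move=> ij; rewrite z_sym ?conjCK. Qed.

Lemma qcommute_Vs_V i j : i != j -> qcommute (z i j)^* (Vs i) (V j).
Proof. by case: dnc => _ [_ VsV] /VsV. Qed.

Lemma qcommute_V_Vs i j : i != j -> qcommute (z i j)^* (V i) (Vs j).
Proof.
move=> ij; apply: (@qcommute_flip _ _ (z i j)); first by rewrite mulrC z_mul_conj.
by rewrite -(conj_z_swap ij); apply: qcommute_Vs_V; rewrite eq_sym.
Qed.

Lemma qcommute_V_V i j : i != j -> qcommute (z i j) (V i) (V j).
Proof.
move=> ij x; apply/eqP; rewrite -subr_eq0; apply/eqP.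
set a := _ - _.
have Vsi_a : Vs i a = 0.
  rewrite VsB Vs_scalable !VK qcommute_Vs_V // VK scalerA z_mul_conj //.
  by rewrite scale1r subrr.
have Vsj_a : Vs j a = 0.
  by rewrite VsB Vs_scalable VK qcommute_Vs_V 1?eq_sym // VK conj_z_swap // subrr.
apply: (inner_self_eq0 ipP); rewrite {1}/a (innerBl ipP) (innerZl ipP).
rewrite (V_adjoint i) Vsi_a (inner0r ipP) (V_adjoint j) Vsj_a (inner0r ipP).
by rewrite mulr0 subrr.
Qed.

Lemma qcommute_Vs_Vs i j : i != j -> qcommute (z i j) (Vs i) (Vs j).
Proof.
move=> ij; rewrite -(conj_z_swap ij).
apply: (qcommute_adjoint ipP (V_adjoint i) (V_adjoint j)).
by apply: qcommute_V_V; rewrite eq_sym.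
Qed.

Lemma V_commute_range_proj i j m : i != j ->
  forall x, V i (iter m (V j) (iter m (Vs j) x)) = iter m (V j) (iter m (Vs j) (V i x)).
Proof.
move=> ij; exact: (@commute_iter_comp _ H) (V_scalable j) (Vs_scalable j)
  (qcommute_V_V ij) (qcommute_V_Vs ij) (z_mul_conj ij).
Qed.

Lemma Vs_commute_range_proj i j m : i != j ->
  forall x, Vs i (iter m (V j) (iter m (Vs j) x)) = iter m (V j) (iter m (Vs j) (Vs i x)).
Proof.
move=> ij; apply: (@commute_iter_comp _ H) (V_scalable j) (Vs_scalable j)
  (qcommute_Vs_V ij) (qcommute_Vs_Vs ij) _.
by rewrite mulrC z_mul_conj.
Qed.

End DoublyNoncommuting.

Theorem corollary3p2 (R : rcfType) (H : lmodType R[i]) (ip : H -> H -> R[i])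
  (n : nat) (z : 'I_n -> 'I_n -> R[i]) (V Vs : 'I_n -> H -> H) :
  is_inner_product ip ->
  (forall i j, i != j -> `|z i j| = 1) ->
  (forall i j, i != j -> z j i = (z i j)^*) ->
  doubly_noncommuting ip z V Vs ->
  forall (k : nat) (i j : 'I_n), i != j ->
    let Q := fun x => iter k (V j) (iter k (Vs j) x) in
    let P := fun x => iter k (V j) (x - V j (Vs j x)) in
    let Pk := fun x => P (iter k (Vs j) x) in
    [/\ (forall x, V i (Q x) = Q (V i x)),
        (forall x, Vs i (Q x) = Q (Vs i x)),
        (forall x, V i (Pk x) = Pk (V i x)) &
        (forall x, Vs i (Pk x) = Pk (Vs i x))].
Proof.
move=> ipP z_norm1 z_sym dnc k i j ij Q P Pk.
have PkE x : Pk x = Q x - iter k.+1 (V j) (iter k.+1 (Vs j) x).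
  by rewrite /Pk /P (iterB k (VB ipP dnc j)) iterSr iterS.
have VQ := V_commute_range_proj ipP z_norm1 z_sym dnc _ ij.
have VsQ := Vs_commute_range_proj ipP z_norm1 z_sym dnc _ ij.
split=> x; rewrite ?PkE /Q.
- exact: VQ.
- exact: VsQ.
- by rewrite (VB ipP dnc) !VQ.
- by rewrite (VsB ipP dnc) !VsQ.
Qed.
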